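(* Let $A, B, C, F \in \mathbb{R}^{n\times n}$ with $A$ invertible, and suppose $\sigma_{\max}(CA^{-1}B) < 1$. Then the matrix equation $$AX + B\lvert CX\rvert = F$$ has exactly one solution $X \in \mathbb{R}^{n\times n}$.
   Context: $\sigma_{\max}(\cdot)$ is the largest singular value and $\lvert M\rvert$ the entrywise absolute value of a matrix $M$. *)

From HB Require Import structures.
From mathcomp Require Import all_boot all_order all_algebra.
From mathcomp Require Import boolp classical_sets reals.
Set Implicit Arguments. Unset Strict Implicit. Unset Printing Implicit Defensive.
Import Order.TTheory GRing.Theory Num.Theory.
Local Open Scope ring_scope.
Local Open Scope classical_set_scope.

Definition vnorm2 (R : realType) (n : nat) (x : 'cV[R]_n) : R :=
  Num.sqrt (\sum_(i < n) x i 0 ^+ 2).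

(* largest singular value = operator 2-norm = sup_{||x||_2 = 1} ||M x||_2
   (sup over the empty set is 0, matching sigma_max of a 0x0 matrix) *)
Definition sigma_max (R : realType) (m n : nat) (M : 'M[R]_(m, n)) : R :=
  sup [set vnorm2 (M *m x) | x in [set x : 'cV[R]_n | vnorm2 x = 1]].

Definition mabs (R : realType) (m n : nat) (M : 'M[R]_(m, n)) : 'M[R]_(m, n) :=
  \matrix_(i, j) `|M i j|.

From HB Require Import structures.
From mathcomp Require Import all_boot all_order all_algebra.
From mathcomp Require Import all_classical all_reals all_analysis.
Import Order.TTheory GRing.Theory Num.Theory.
Set Implicit Arguments. Unset Strict Implicit. Unset Printing Implicit Defensive.
Local Open Scope ring_scope.

(* With M := C A^-1 B and G := C A^-1 F, a matrix X solves the equation iff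
   Z := C X is a fixed point of Z |-> G - M |Z| and X = A^-1 (F - B |Z|).
   Since ||a| - |b|| <= |a - b| entrywise and ||M W||_F <= sigma_max(M) ||W||_F,
   this map is a sigma_max(M)-contraction for the Frobenius norm.  The complete
   norm the library puts on matrices is the max-entry norm, which is equivalent
   to the Frobenius norm, so some iterate of the map contracts for it and the
   Banach fixed point theorem applies. *)

Section FixedPoint.
Context {R : realType} {X : completeNormedModType R}.

Lemma iter_contraction_unique_fixpoint (f : X -> X) (k : nat) (q : R) :
  0 <= q < 1 -> (forall x y, `|iter k f x - iter k f y| <= q * `|x - y|) ->
  exists! x, f x = x.
Proof.
move=> /andP[q0 q1] lip.
pose g : {fun setT >-> @setT X} := totalfun (iter k f).
have ctr : is_contraction g by exists (NngNum q0); split => // -[x y] _; exact: lip.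
have [x _ gx] := banach_fixed_point ctr closedT (ex_intro _ 0 I).
have {}gx : iter k f x = x by exact/esym/gx.
exists x; split => [|y fy]; apply: (contraction_fixpoint_unique ctr I I).
- by change (f x = iter k f (f x)); rewrite -iterSr iterS gx.
- exact: esym gx.
- exact: esym gx.
- by change (y = iter k f y); rewrite iter_fix.
Qed.

End FixedPoint.

Lemma exists_expr_mul_lt1 (R : realType) (q c : R) :
  `|q| < 1 -> exists k, q ^+ k * c < 1.
Proof.
move=> q1; have [N _ qc] : \forall k \near \oo%classic, q ^+ k * c < 1.
  by apply: (cvgr_lt _ (cvgM (cvg_expr q1) (cvg_cst (c : R^o)))); rewrite mul0r.
by exists N; apply: qc => /=.
Qed.

Lemma ler_sqr_norm (R : realDomainType) (x y : R) : `|x| <= `|y| -> x ^+ 2 <= y ^+ 2.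
Proof.
by rewrite -[x ^+ 2]real_normK ?num_real // -[y ^+ 2]real_normK ?num_real // ler_pXn2r ?nnegrE.
Qed.

Section Frobenius.
Context {R : realType}.

Definition frob2 m p (Z : 'M[R]_(m, p)) : R := \sum_i \sum_j Z i j ^+ 2.

Lemma frob2_ge0 m p (Z : 'M[R]_(m, p)) : 0 <= frob2 Z.
Proof. by do 2!apply: sumr_ge0 => ? _; exact: sqr_ge0. Qed.

Lemma sqr_le_frob2 m p (Z : 'M[R]_(m, p)) i j : Z i j ^+ 2 <= frob2 Z.
Proof.
rewrite /frob2 (bigD1 i) //= (bigD1 j) //= -addrA lerDl.
apply: addr_ge0; apply: sumr_ge0 => k _; rewrite ?sqr_ge0 //.
by apply: sumr_ge0 => l _; exact: sqr_ge0.
Qed.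

Lemma frob2_le m p (Y Z : 'M[R]_(m, p)) :
  (forall i j, `|Y i j| <= `|Z i j|) -> frob2 Y <= frob2 Z.
Proof. by move=> YZ; do 2!apply: ler_sum => ? _; exact: ler_sqr_norm. Qed.

Lemma frob2Z m p (c : R) (Z : 'M[R]_(m, p)) : frob2 (c *: Z) = c ^+ 2 * frob2 Z.
Proof.
rewrite /frob2 mulr_sumr; apply: eq_bigr => i _; rewrite mulr_sumr.
by apply: eq_bigr => j _; rewrite mxE exprMn.
Qed.

Lemma abs_entry_le_sqrt_frob2 m p (Z : 'M[R]_(m, p)) i j :
  `|Z i j| <= Num.sqrt (frob2 Z).
Proof. by rewrite -sqrtr_sqr ler_sqrt ?frob2_ge0 ?sqr_le_frob2. Qed.

Lemma mx_norm_le_sqrt_frob2 m p (Z : 'M[R]_(m, p)) : `|Z| <= Num.sqrt (frob2 Z).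
Proof.
rewrite [`|Z|]mx_normrE; apply: bigmax_le => [|[i j] _]; first exact: sqrtr_ge0.
exact: abs_entry_le_sqrt_frob2.
Qed.

Lemma abs_entry_le_mx_norm m p (Z : 'M[R]_(m, p)) i j : `|Z i j| <= `|Z|.
Proof.
by rewrite [`|Z|]mx_normrE (le_bigmax _ (fun ij : 'I_m * 'I_p => `|Z ij.1 ij.2|) (i, j)).
Qed.

Lemma frob2_le_mx_norm m p (Z : 'M[R]_(m, p)) : frob2 Z <= `|Z| ^+ 2 *+ (m * p).
Proof.
have -> : `|Z| ^+ 2 *+ (m * p) = \sum_(i < m) \sum_(j < p) `|Z| ^+ 2.
  by rewrite !sumr_const !card_ord -mulrnA mulnC.
do 2!apply: ler_sum => ? _; apply: ler_sqr_norm.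
by rewrite (ger0_norm (normr_ge0 _)) abs_entry_le_mx_norm.
Qed.

Lemma frob2_mabsB m p (Y Z : 'M[R]_(m, p)) :
  frob2 (mabs Y - mabs Z) <= frob2 (Y - Z).
Proof. by apply: frob2_le => i j; rewrite !mxE ler_dist_dist. Qed.

Lemma frob2N m p (Z : 'M[R]_(m, p)) : frob2 (- Z) = frob2 Z.
Proof. by rewrite -scaleN1r frob2Z sqrrN expr1n mul1r. Qed.

Lemma vnorm2_frob2 n (x : 'cV[R]_n) : vnorm2 x = Num.sqrt (frob2 x).
Proof. by rewrite /frob2; under [in RHS]eq_bigr do rewrite big_ord1. Qed.

Lemma vnorm2Z n (c : R) (x : 'cV[R]_n) : vnorm2 (c *: x) = `|c| * vnorm2 x.
Proof. by rewrite !vnorm2_frob2 frob2Z sqrtrM ?sqr_ge0 // sqrtr_sqr. Qed.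

Lemma vnorm2_ge0 n (x : 'cV[R]_n) : 0 <= vnorm2 x.
Proof. exact: sqrtr_ge0. Qed.

Lemma vnorm20 n : vnorm2 (0 : 'cV[R]_n) = 0.
Proof. by rewrite -(scale0r 0) vnorm2Z normr0 mul0r. Qed.

Lemma frob2_col m p (Z : 'M[R]_(m, p)) : frob2 Z = \sum_j vnorm2 (col j Z) ^+ 2.
Proof.
rewrite /frob2 exchange_big; apply: eq_bigr => j _.
rewrite sqr_sqrtr; last by apply: sumr_ge0 => i _; exact: sqr_ge0.
by apply: eq_bigr => i _; rewrite mxE.
Qed.

End Frobenius.

Section SigmaMax.
Context {R : realType} {m n : nat} (M : 'M[R]_(m, n)).
Local Open Scope classical_set_scope.

Let unit_image := [set vnorm2 (M *m x) | x in [set x : 'cV[R]_n | vnorm2 x = 1]].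

Lemma unit_image_ubound : has_ubound unit_image.
Proof.
exists (vnorm2 (\col_i \sum_j `|M i j|)) => _ [x /= x1 <-].
rewrite !vnorm2_frob2 ler_sqrt ?frob2_ge0 //; apply: frob2_le => i j.
rewrite (ord1 j) !mxE [X in _ <= X]ger0_norm ?sumr_ge0 //.
apply: (le_trans (ler_norm_sum _ _ _)); apply: ler_sum => k _.
by rewrite normrM ler_piMr // -x1 vnorm2_frob2 abs_entry_le_sqrt_frob2.
Qed.

Lemma vnorm2_mulmx_unit_le x : vnorm2 x = 1 -> vnorm2 (M *m x) <= sigma_max M.
Proof. by move=> x1; apply: (ub_le_sup unit_image_ubound); exists x. Qed.

Lemma sigma_max_ge0 : 0 <= sigma_max M.
Proof.
have [S0|/set0P[_ [x x1 _]]] := eqVneq unit_image set0.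
  by rewrite /sigma_max -/unit_image S0 sup0.
exact: le_trans (vnorm2_ge0 _) (vnorm2_mulmx_unit_le x1).
Qed.

Lemma vnorm2_mulmx_le x : vnorm2 (M *m x) <= sigma_max M * vnorm2 x.
Proof.
have [x0|x_neq0] := eqVneq (vnorm2 x) 0.
  have -> : x = 0 by apply/matrixP => i j; apply/eqP;
    rewrite mxE -normr_le0 -x0 vnorm2_frob2 abs_entry_le_sqrt_frob2.
  by rewrite mulmx0 !vnorm20 mulr0.
have x_gt0 : 0 < vnorm2 x by rewrite lt_def x_neq0 vnorm2_ge0.
have u1 : vnorm2 ((vnorm2 x)^-1 *: x) = 1.
  by rewrite vnorm2Z ger0_norm ?invr_ge0 ?vnorm2_ge0 // mulVf.
have := vnorm2_mulmx_unit_le u1.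
by rewrite -scalemxAr vnorm2Z ger0_norm ?invr_ge0 ?vnorm2_ge0 // mulrC ler_pdivrMr.
Qed.

Lemma frob2_mulmx_le p (Z : 'M[R]_(n, p)) :
  frob2 (M *m Z) <= sigma_max M ^+ 2 * frob2 Z.
Proof.
rewrite !frob2_col mulr_sumr; apply: ler_sum => j _.
rewrite colE -mulmxA -colE -exprMn ler_pXn2r ?nnegrE ?vnorm2_ge0 //.
  exact: vnorm2_mulmx_le.
by rewrite mulr_ge0 ?sigma_max_ge0 ?vnorm2_ge0.
Qed.

End SigmaMax.

(* The instances the library declares on 'M[R]_(m, n) do not assemble into a
   completeNormedModType, so that structure is built on an alias. *)
Section CompleteMatrix.
Variables (R : realType) (m n : nat).

Definition complete_mx := 'M[R]_(m, n).
HB.instance Definition _ := NormedModule.on complete_mx.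
HB.instance Definition _ := isPointed.Build complete_mx 0.
HB.instance Definition _ := Uniform_isComplete.Build complete_mx (@mx_complete R m n).

End CompleteMatrix.

Section AbsEquation.
Context {R : realType} {n p : nat} (M : 'M[R]_n) (G : 'M[R]_(n, p)).

Definition abs_map (Z : 'M[R]_(n, p)) := G - M *m mabs Z.

Lemma frob2_abs_mapB Y Z :
  frob2 (abs_map Y - abs_map Z) <= sigma_max M ^+ 2 * frob2 (Y - Z).
Proof.
have -> : abs_map Y - abs_map Z = M *m (mabs Z - mabs Y).
  by rewrite /abs_map mulmxBr opprB addrC addrA subrK.
apply: le_trans (frob2_mulmx_le _ _) _.
apply: ler_wpM2l; first exact: sqr_ge0.
by rewrite -frob2N opprB frob2_mabsB.
Qed.

Lemma frob2_iter_abs_mapB k Y Z :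
  frob2 (iter k abs_map Y - iter k abs_map Z) <= (sigma_max M ^+ 2) ^+ k * frob2 (Y - Z).
Proof.
elim: k => [|k IHk]; first by rewrite expr0 mul1r.
apply: le_trans (frob2_abs_mapB _ _) _.
rewrite [_ ^+ k.+1]exprS -mulrA.
by apply: ler_wpM2l; [exact: sqr_ge0 | exact: IHk].
Qed.

Lemma mx_norm_iter_abs_mapB k Y Z :
  `|iter k abs_map Y - iter k abs_map Z|
    <= sigma_max M ^+ k * Num.sqrt (n * p)%:R * `|Y - Z|.
Proof.
apply: le_trans (mx_norm_le_sqrt_frob2 _) _.
have rhs_ge0 : 0 <= sigma_max M ^+ k * Num.sqrt (n * p)%:R * `|Y - Z|.
  by rewrite !mulr_ge0 ?exprn_ge0 ?sigma_max_ge0 ?sqrtr_ge0.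
rewrite -(ger0_norm rhs_ge0) -sqrtr_sqr ler_sqrt ?sqr_ge0 //.
rewrite !exprMn -exprM mulnC exprM sqr_sqrtr ?ler0n // -mulrA mulr_natl.
apply: le_trans (frob2_iter_abs_mapB _ _ _) _.
by apply: ler_wpM2l; [rewrite exprn_ge0 ?sqr_ge0 | exact: frob2_le_mx_norm].
Qed.

Lemma abs_map_unique_fixpoint : sigma_max M < 1 -> exists! Z, abs_map Z = Z.
Proof.
move=> sigma_lt1.
have [k contr] : exists k, sigma_max M ^+ k * Num.sqrt (n * p)%:R < 1.
  by apply: exists_expr_mul_lt1; rewrite ger0_norm ?sigma_max_ge0.
apply: (@iter_contraction_unique_fixpoint R (complete_mx R n p) abs_map k _ _
  (mx_norm_iter_abs_mapB k)).
by rewrite contr mulr_ge0 ?exprn_ge0 ?sigma_max_ge0 ?sqrtr_ge0.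
Qed.

End AbsEquation.

Lemma abs_eq_solutionE (R : realType) (n p q : nat) (A : 'M[R]_n) {B : 'M[R]_(n, q)}
    {C : 'M[R]_(q, n)} {F X : 'M[R]_(n, p)} :
  A \in unitmx ->
  A *m X + B *m mabs (C *m X) = F <-> X = invmx A *m (F - B *m mabs (C *m X)).
Proof.
move=> A_unit; split => [<-|X_eq]; first by rewrite addrK mulKmx.
by rewrite {1}X_eq mulKVmx // subrK.
Qed.

Theorem proposition4p1 (R : realType) (n : nat) (A B C F : 'M[R]_n) :
  A \in unitmx ->
  sigma_max (C *m invmx A *m B) < 1 ->
  exists! X : 'M[R]_n, A *m X + B *m mabs (C *m X) = F.
Proof.
move=> A_unit sigma_lt1.
have [Z [Z_fix Z_uniq]] := abs_map_unique_fixpoint (C *m invmx A *m F) sigma_lt1.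
exists (invmx A *m (F - B *m mabs Z)); split.
  have CX : C *m (invmx A *m (F - B *m mabs Z)) = Z.
    by rewrite -[RHS]Z_fix /abs_map !mulmxA mulmxBr !mulmxA.
  by apply/abs_eq_solutionE; rewrite // CX.
move=> Y /(abs_eq_solutionE A_unit) Y_eq.
have CY_fix : abs_map (C *m invmx A *m B) (C *m invmx A *m F) (C *m Y) = C *m Y.
  by rewrite [in RHS]Y_eq /abs_map !mulmxBr !mulmxA.
by rewrite (Z_uniq _ CY_fix) -Y_eq.
Qed.
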